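(* Let $N_q\ge 1$ and let $\{s_{t,j}\}$, $1\le t\le N_q$, $1\le j\le n$, be real numbers. For each $j$ define $a_j := \max_{1\le t\le N_q} s_{t,j}$ and $g_j := \log\sum_{t=1}^{N_q}\exp(s_{t,j})$. Let $a_{(1)}\ge a_{(2)}\ge \dots \ge a_{(n)}$ be the values $\{a_j\}$ sorted in non-increasing order, and let $1\le K<n$. If $a_{(K)} - a_{(K+1)} > \log N_q$, then the set of $K$ indices $j$ with the largest values of $a_j$ is identical to the set of $K$ indices $j$ with the largest values of $g_j$.
   Context: In the paper's setting, $s_{t,j}$ is the cosine similarity between query-token hidden state $h_t$ and visual token embedding $v_j$; $a_j$ is the max-similarity pruning score and $g_j$ the log-sum-exp (smooth attention-style pooling) score of visual token $j$. *)

From HB Require Import structures.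
From mathcomp Require Import all_boot all_order all_algebra.
From mathcomp Require Import all_classical all_reals all_analysis.
Set Implicit Arguments. Unset Strict Implicit. Unset Printing Implicit Defensive.
Import Order.TTheory GRing.Theory Num.Theory.
Local Open Scope ring_scope.

(* a_j := max_{t} s_{t,j}: the maximum is computed in the extended reals
   (with -oo as neutral element) and brought back to R with [fine];
   for Nq >= 1 this is exactly the (finite) maximum. *)
Definition maxsim (R : realType) (Nq n : nat) (s : 'I_Nq -> 'I_n -> R)
  (j : 'I_n) : R :=
  fine (\big[Order.max/-oo%E]_(t < Nq) ((s t j)%:E)).

Definition lsescore (R : realType) (Nq n : nat) (s : 'I_Nq -> 'I_n -> R)
  (j : 'I_n) : R :=
  ln (\sum_(t < Nq) expR (s t j)).

Definition sorted_desc (R : realType) (n : nat) (f : 'I_n -> R) : seq R :=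
  sort (fun x y : R => y <= x) [seq f j | j <- enum 'I_n].

Definition topK (R : realType) (n : nat) (f : 'I_n -> R) (K : nat)
  (S : {set 'I_n}) : Prop :=
  #|S| = K /\ (forall i j, i \in S -> j \notin S -> f j <= f i).

From HB Require Import structures.
From mathcomp Require Import all_boot all_order all_algebra.
From mathcomp Require Import all_classical all_reals all_analysis.
From mathcomp Require Import lra.
Set Implicit Arguments. Unset Strict Implicit. Unset Printing Implicit Defensive.
Import Order.TTheory GRing.Theory Num.Theory.
Local Open Scope ring_scope.

(* Each g_j lies in [a_j, a_j + log N_q], so a gap larger than log N_q
   between the K-th and (K+1)-th largest a_j still strictly separates the
   corresponding g_j.  Both top-K sets are therefore the unique set of indices
   lying above that gap. *)

Section SortedNonincreasing.
Variables (d : Order.disp_t) (T : orderType d) (x0 : T) (L : seq T).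
Hypothesis L_sorted : sorted (fun x y : T => (y <= x)%O) L.

Lemma sorted_ge_nth i j : (i <= j)%N -> (j < size L)%N ->
  (nth x0 L j <= nth x0 L i)%O.
Proof.
move=> le_ij lt_jL; apply: (sorted_leq_nth _ _ _ L_sorted) => //.
- by move=> y x z /= le_xy le_zx; exact: le_trans le_zx le_xy.
- by rewrite inE (leq_ltn_trans le_ij).
Qed.

Variable K : nat.
Hypotheses (K_gt0 : (0 < K)%N) (K_lt : (K < size L)%N).
Hypothesis gapK : (nth x0 L K < nth x0 L K.-1)%O.

Lemma le_nth_gap x : x \in L -> (x < nth x0 L K.-1)%O -> (x <= nth x0 L K)%O.
Proof.
move=> xL lt_x; rewrite -(nth_index x0 xL).
have [lt_iK|le_Ki] := ltnP (index x L) K; last first.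
  by apply: sorted_ge_nth; rewrite // index_mem.
move: lt_x; rewrite -{1}(nth_index x0 xL) ltNge sorted_ge_nth //.
- by rewrite -ltnS (ltn_predK K_gt0).
- by rewrite (leq_ltn_trans (leq_pred K)).
Qed.

Lemma count_ge_nth_gap : count (fun x => nth x0 L K.-1 <= x)%O L = K.
Proof.
set a := nth x0 L K.-1.
have size_take : size (take K L) = K by rewrite size_takel // ltnW.
have lt_predK : (K.-1 < size L)%N by rewrite (leq_ltn_trans (leq_pred K)).
have all_take : all (fun x => a <= x)%O (take K L).
  apply/(all_nthP x0) => i; rewrite size_take => lt_iK.
  by rewrite nth_take // sorted_ge_nth // -ltnS (ltn_predK K_gt0).
have no_drop : ~~ has (fun x => a <= x)%O (drop K L).
  apply/(has_nthP x0) => -[i]; rewrite size_drop nth_drop ltn_subRL => lt_i.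
  by rewrite leNgt (le_lt_trans _ gapK) // sorted_ge_nth ?leq_addr.
rewrite -(cat_take_drop K L) count_cat.
move: all_take no_drop; rewrite all_count has_count -leqNgt leqn0 => /eqP-> /eqP->.
by rewrite size_take addn0.
Qed.

End SortedNonincreasing.

Section SortedDesc.
Variables (R : realType) (n : nat) (f : 'I_n -> R).

Lemma sorted_desc_sorted : sorted (fun x y : R => y <= x) (sorted_desc f).
Proof. by apply: sort_sorted => x y; exact: le_total. Qed.

Lemma size_sorted_desc : size (sorted_desc f) = n.
Proof. by rewrite size_sort size_map size_enum_ord. Qed.

Lemma perm_sorted_desc : perm_eq (sorted_desc f) [seq f j | j <- enum 'I_n].
Proof. by rewrite /sorted_desc perm_sort. Qed.

Lemma mem_sorted_desc j : f j \in sorted_desc f.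
Proof. by rewrite (perm_mem perm_sorted_desc) map_f ?mem_enum. Qed.

Variable K : nat.
Hypotheses (K_gt0 : (0 < K)%N) (K_lt_n : (K < n)%N).
Let A := nth 0 (sorted_desc f) K.-1.
Let B := nth 0 (sorted_desc f) K.
Hypothesis gapK : B < A.

Lemma card_sorted_desc_top : #|[set j | A <= f j]| = K.
Proof.
rewrite cardsE cardE /enum_mem size_filter /= -enumT.
rewrite -(count_map f (fun x => A <= x)) -(permP perm_sorted_desc) count_ge_nth_gap //.
- exact: sorted_desc_sorted.
- by rewrite size_sorted_desc.
Qed.

Lemma le_sorted_desc_gap j : f j < A -> f j <= B.
Proof.
apply: le_nth_gap => //; first exact: sorted_desc_sorted.
- by rewrite size_sorted_desc.
- exact: mem_sorted_desc.
Qed.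

End SortedDesc.

Section LogSumExp.
Variables (R : realType) (I : finType) (x : I -> R) (t : I).
Hypothesis x_le_t : forall u, x u <= x t.

Lemma sum_expR_gt0 : 0 < \sum_u expR (x u).
Proof. by rewrite (bigD1 t) //= ltr_pwDl ?expR_gt0 ?sumr_ge0. Qed.

Lemma le_ln_sum_expR : x t <= ln (\sum_u expR (x u)).
Proof.
rewrite -ler_expR lnK ?posrE ?sum_expR_gt0 // (bigD1 t) //= lerDl.
by rewrite sumr_ge0 // => u _; exact: expR_ge0.
Qed.

Lemma ln_sum_expR_le : ln (\sum_u expR (x u)) <= x t + ln #|I|%:R.
Proof.
have cardI_gt0 : (0 : R) < #|I|%:R by rewrite ltr0n; apply/card_gt0P; exists t.
rewrite addrC -[x t]expRK -lnM ?posrE ?expR_gt0 //.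
rewrite ler_ln ?posrE ?mulr_gt0 ?expR_gt0 ?sum_expR_gt0 //.
rewrite mulr_natl -sumr_const; apply: ler_sum => u _.
by rewrite ler_expR.
Qed.

End LogSumExp.

Section MaxSim.
Variables (R : realType) (Nq n : nat) (s : 'I_Nq -> 'I_n -> R).
Hypothesis Nq_gt0 : (0 < Nq)%N.

Lemma maxsim_argmax j : exists2 t, maxsim s j = s t j & forall u, s u j <= s t j.
Proof.
have [t _ max_t] := @eq_bigmax _ _ _ -oo%E (Ordinal Nq_gt0) xpredT
  (fun t => (s t j)%:E) isT (fun _ _ => leNye _).
exists t => [|u]; first by rewrite /maxsim max_t.
by rewrite -lee_fin -max_t; exact: le_bigmax.
Qed.

Lemma lsescore_bounds j :
  maxsim s j <= lsescore s j <= maxsim s j + ln Nq%:R.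
Proof.
have [t -> le_t] := maxsim_argmax j.
by rewrite le_ln_sum_expR //= -[X in ln X%:R](card_ord Nq) ln_sum_expR_le.
Qed.

End MaxSim.

Lemma topK_sepE (R : realType) (n : nat) (f : 'I_n -> R) (K : nat)
    (T S : {set 'I_n}) :
  #|T| = K -> (forall i j, i \in T -> j \notin T -> f j < f i) ->
  topK f K S <-> S = T.
Proof.
move=> card_T sep_T; split=> [[card_S top_S]|->]; last first.
  by split=> // i j iT jT; exact/ltW/sep_T.
apply/eqP; rewrite eq_sym eqEcard card_S card_T leqnn andbT.
apply/fintype.subsetP=> i iT; apply/negPn/negP=> iS.
have /fintype.subsetPn[j jS jT] : ~~ (S \subset T).
  by apply: contraNN iS => /(subset_cardP (etrans card_S (esym card_T))) ->.
by move: (top_S j i jS iS); rewrite leNgt sep_T.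
Qed.

Theorem corollaryA2 (R : realType) (Nq n : nat) (s : 'I_Nq -> 'I_n -> R)
  (K : nat) :
  (1 <= Nq)%N -> (1 <= K)%N -> (K < n)%N ->
  nth 0 (sorted_desc (maxsim s)) K.-1 - nth 0 (sorted_desc (maxsim s)) K
    > ln (Nq%:R : R) ->
  forall S : {set 'I_n}, topK (maxsim s) K S <-> topK (lsescore s) K S.
Proof.
move=> Nq_gt0 K_gt0 K_lt_n gap S.
set A := nth 0 _ K.-1 in gap; set B := nth 0 _ K in gap.
have ln_Nq_ge0 : 0 <= ln (Nq%:R : R) by rewrite ln_ge0 // ler1n.
have lt_BA : B < A by rewrite -subr_gt0 (le_lt_trans ln_Nq_ge0).
set T := [set j | A <= maxsim s j].
have card_T : #|T| = K by exact: card_sorted_desc_top.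
have le_B j : j \notin T -> maxsim s j <= B.
  by rewrite inE -ltNge; exact: le_sorted_desc_gap.
have sep_maxsim i j : i \in T -> j \notin T -> maxsim s j < maxsim s i.
  by rewrite inE => le_Ai /le_B le_jB; exact: le_lt_trans le_jB (lt_le_trans lt_BA le_Ai).
have sep_lsescore i j : i \in T -> j \notin T -> lsescore s j < lsescore s i.
  rewrite inE => le_Ai /le_B le_jB.
  have /andP[le_i _] := lsescore_bounds s Nq_gt0 i.
  have /andP[_ le_j] := lsescore_bounds s Nq_gt0 j.
  lra.
by rewrite (topK_sepE S card_T sep_maxsim) (topK_sepE S card_T sep_lsescore).
Qed.
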